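(* Fix $q\in V(G)$ and let $D\in\operatorname{Div}(G)$. Then $D$ is $q$-reduced if and only if $D\in|D|_q$ and $b_q(D)<b_q(D')$ for every $D'\in|D|_q$ with $D'\ne D$.
   Context: $G$ is a finite connected multigraph without loop edges, with vertex set $V(G)$ and edge set $E(G)$. A divisor is an element $D=\sum_{v}D(v)(v)$ of the free abelian group $\operatorname{Div}(G)$ on $V(G)$; $\deg(D)=\sum_vD(v)$. The Laplacian $\Delta$ sends a function $f:V(G)\to\mathbb{Q}$ to $\Delta(f)=\sum_v\Delta_v(f)(v)$ with $\Delta_v(f)=\sum_{\{v,w\}\in E(G)}(f(v)-f(w))$ (edges counted with multiplicity). $D_1\sim D_2$ means $D_1-D_2=\Delta(f)$ for some integer-valued $f$. For $q\in V(G)$, $|D|_q=\{E\in\operatorname{Div}(G): E\sim D,\ E(v)\ge 0\text{ for all }v\ne q\}$. For $A\subseteq V(G)$ and $v\in A$, $\operatorname{outdeg}_A(v)$ is the number of edges joining $v$ to $V(G)\setminus A$. A divisor $D$ is $q$-reduced if (i) $D(v)\ge 0$ for all $v\ne q$, and (ii) for every non-empty $A\subseteq V(G)\setminus\{q\}$ there is $v\in A$ with $D(v)<\operatorname{outdeg}_A(v)$. $Q$ is the Laplacian matrix with respect to a labeling of $V(G)$. For degree-zero divisors $D_1,D_2$, the energy pairing is $\langle D_1,D_2\rangle=[D_1]^TL[D_2]$ for any generalized inverse $L$ of $Q$ ($QLQ=Q$), independent of $L$. For divisors $D,E$, $\langle D,E\rangle_q=\langle D-\deg(D)(q),\,E-\deg(E)(q)\rangle$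 and $b_q(D)=\langle\mathbf{1},D\rangle_q$ with $\mathbf{1}=\sum_{v\in V(G)}(v)$. *)

(* Vertices of G are labelled 'I_n; a loopless multigraph is
   given by an edge-multiplicity function m : 'I_n -> 'I_n -> nat. *)
From HB Require Import structures.
From mathcomp Require Import all_boot all_order all_algebra.
Set Implicit Arguments. Unset Strict Implicit. Unset Printing Implicit Defensive.
Import Order.TTheory GRing.Theory Num.Theory.
Local Open Scope ring_scope.

Definition mgraph (n : nat) := 'I_n -> 'I_n -> nat.

Definition is_graph (n : nat) (m : mgraph n) : Prop :=
  (forall u v, m u v = m v u) /\ (forall v, m v v = 0%N) /\
  (forall u v, connect (fun x y => (0 < m x y)%N) u v).

Definition divisor (n : nat) := {ffun 'I_n -> int}.

Definition degD n (D : divisor n) : int := \sum_i D i.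

Definition lap n (m : mgraph n) (f : 'I_n -> int) (v : 'I_n) : int :=
  \sum_w (m v w)%:Z * (f v - f w).

Definition lin_equiv n (m : mgraph n) (D1 D2 : divisor n) : Prop :=
  exists f : 'I_n -> int, forall v, D1 v - D2 v = lap m f v.

Definition linsys n (m : mgraph n) (q : 'I_n) (D E : divisor n) : Prop :=
  lin_equiv m E D /\ (forall v, v != q -> 0 <= E v).

Definition outdeg n (m : mgraph n) (A : {set 'I_n}) (v : 'I_n) : int :=
  (\sum_(w in ~: A) m v w)%N%:Z.

Definition q_reduced n (m : mgraph n) (q : 'I_n) (D : divisor n) : Prop :=
  (forall v, v != q -> 0 <= D v) /\
  (forall A : {set 'I_n}, A != set0 -> q \notin A ->
     exists2 v, v \in A & D v < outdeg m A v).

Definition lapmx n (m : mgraph n) : 'M[rat]_n :=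
  \matrix_(i, j) (if i == j then (\sum_k m i k)%N%:R else - (m i j)%:R).

Definition colD n (D : divisor n) : 'cV[rat]_n := \col_i ((D i)%:~R).

(* energy pairing computed with a given generalized inverse L of Q *)
Definition energy n (L : 'M[rat]_n) (D1 D2 : divisor n) : rat :=
  ((colD D1)^T *m L *m colD D2) 0 0.

Definition delta n (q : 'I_n) : divisor n := [ffun v => (v == q)%:Z].

Definition shiftq n (q : 'I_n) (D : divisor n) : divisor n :=
  [ffun v => D v - degD D * delta q v].

Definition energy_q n (L : 'M[rat]_n) (q : 'I_n) (D E : divisor n) : rat :=
  energy L (shiftq q D) (shiftq q E).

Definition one_div n : divisor n := [ffun _ => 1].

Definition b_q n (L : 'M[rat]_n) (q : 'I_n) (D : divisor n) : rat :=
  energy_q L q (one_div n) D.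

From HB Require Import structures.
From mathcomp Require Import all_boot all_order all_algebra.
From mathcomp Require Import zify.
Import Order.TTheory GRing.Theory Num.Theory.
Local Open Scope ring_scope.
Set Implicit Arguments. Unset Strict Implicit.

(* The key identity is an explicit formula for how b_q changes under linear
   equivalence: if D' = D + Δf then b_q(D') = b_q(D) + Σ_v (f v - f q).
   It rests on two facts about the Laplacian matrix Q of a connected graph:
   its left kernel consists of constant vectors (maximum principle), so every
   degree-zero vector lies in its row space, and therefore any generalized
   inverse L of Q satisfies X^T L Q = X^T for deg X = 0.
   With the formula in hand:
   - if D is q-reduced and D + Δf ∈ |D|_q, a level-set (Dhar burning)
     argument shows that f attains its minimum at q, so the energy gain
     Σ_v (f v - f q) is nonnegative and vanishes only when f is constant,
     i.e. when D' = D;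
   - conversely, if some set A ∌ q violates reducedness, firing A
     (f = -1_A) stays in |D|_q and decreases b_q by #|A| > 0. *)

Section Divisors.

Variable n : nat.

Lemma sum_delta (q : 'I_n) : \sum_v delta q v = 1.
Proof. by rewrite (bigD1 q) //= ffunE eqxx big1 ?addr0 // => v /negbTE; rewrite ffunE => ->. Qed.

Lemma degD_shiftq (q : 'I_n) (D : divisor n) : degD (shiftq q D) = 0.
Proof.
rewrite /degD; under eq_bigr do rewrite ffunE.
by rewrite sumrB -mulr_sumr sum_delta mulr1 subrr.
Qed.

Lemma colD_pairing (X : divisor n) (f : 'I_n -> int) :
  ((colD X)^T *m \col_j ((f j)%:~R : rat)) 0 0 = (\sum_v X v * f v)%:~R.
Proof.
rewrite mxE rmorph_sum; apply: eq_bigr => v _.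
by rewrite !mxE rmorphM.
Qed.

Lemma shiftq_one_pairing (q : 'I_n) (f : 'I_n -> int) :
  \sum_v shiftq q (one_div n) v * f v = \sum_v (f v - f q).
Proof.
have deg_one : degD (one_div n) = n%:Z.
  by rewrite /degD; under eq_bigr do rewrite ffunE; rewrite sumr_const card_ord natz.
under eq_bigr do rewrite !ffunE mulrBl mul1r.
rewrite !sumrB sumr_const card_ord -mulr_natl natz deg_one; congr (_ - _).
rewrite (bigD1 q) //= eqxx mulr1 big1 ?addr0 // => v /negbTE ->.
by rewrite mulr0 mul0r.
Qed.

End Divisors.

Section Laplacian.

Variables (n : nat) (m : mgraph n).
Hypothesis m_sym : forall u v, m u v = m v u.
Hypothesis m_loop : forall v, m v v = 0%N.
Hypothesis m_conn : forall u v, connect (fun x y => (0 < m x y)%N) u v.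

Local Notation Q := (lapmx m).

Lemma lapmx_mulcol (g : 'I_n -> rat) i :
  (Q *m \col_j g j) i 0 = \sum_w (m i w)%:R * (g i - g w).
Proof.
rewrite !mxE.
transitivity (\sum_k ((i == k)%:R * (\sum_k m i k)%N%:R * g k - (m i k)%:R * g k)).
  apply: eq_bigr => k _; rewrite !mxE.
  case: eqP => [<-|_]; first by rewrite m_loop mul1r mul0r !subr0.
  by rewrite !mul0r sub0r mulNr.
rewrite sumrB (bigD1 i) //= eqxx mul1r [X in (_ + X) - _]big1 ?addr0; last first.
  by move=> k hk; rewrite eq_sym (negbTE hk) !mul0r.
rewrite natr_sum mulr_suml -sumrB; apply: eq_bigr => w _.
by rewrite mulrBr.
Qed.

Lemma lap_rat (f : 'I_n -> int) i :
  ((lap m f i)%:~R : rat) = \sum_w (m i w)%:R * ((f i)%:~R - (f w)%:~R).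
Proof. by rewrite /lap rmorph_sum; apply: eq_bigr => w _; rewrite rmorphM rmorphB. Qed.

Lemma lapmx_tr : Q^T = Q.
Proof. by apply/matrixP => a b; rewrite !mxE eq_sym; case: eqP => [->|_]; rewrite // m_sym. Qed.

Lemma lapmx_const : Q *m (const_mx 1 : 'cV[rat]_n) = 0.
Proof.
have -> : (const_mx 1 : 'cV[rat]_n) = \col_j 1 by apply/matrixP => a b; rewrite !mxE.
apply/matrixP => a b; rewrite ord1 lapmx_mulcol mxE.
by rewrite big1 // => w _; rewrite subrr mulr0.
Qed.

Lemma lap_sum0 (f : 'I_n -> int) : \sum_v lap m f v = 0.
Proof.
rewrite /lap.
under eq_bigr do rewrite (eq_bigr _ (fun w _ => mulrBr _ _ _)) sumrB.
rewrite sumrB exchange_big /=; apply/eqP; rewrite subr_eq0; apply/eqP.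
by apply: eq_bigr => v _; apply: eq_bigr => w _; rewrite m_sym.
Qed.

Lemma degD_lap (D D' : divisor n) (f : 'I_n -> int) :
  (forall v, D' v - D v = lap m f v) -> degD D' = degD D.
Proof.
move=> hD; apply/eqP; rewrite -subr_eq0 /degD -sumrB.
by rewrite (eq_bigr _ (fun v _ => hD v)) lap_sum0.
Qed.

Lemma lap_const (f : 'I_n -> int) v : (forall w, f w = f v) -> lap m f v = 0.
Proof. by move=> hf; rewrite /lap big1 // => w _; rewrite hf subrr mulr0. Qed.

(* Maximum principle: every row vector u with u Q = 0 is constant, since at
   a maximum of u all neighbours share the maximal value. *)
Lemma lapmx_lker_const (u : 'rV[rat]_n) :
  u *m Q = 0 -> forall i j, u 0 i = u 0 j.
Proof.
move=> Hu.
have harm i : \sum_w (m i w)%:R * (u 0 i - u 0 w) = 0.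
  have ucol : u^T = \col_j u 0 j by apply/matrixP => a b; rewrite !mxE ord1.
  by rewrite -(lapmx_mulcol (fun j => u 0 j)) -ucol -lapmx_tr -trmx_mul Hu trmx0 mxE.
suff Hmax : forall v0, (forall k, u 0 k <= u 0 v0) -> forall j, u 0 j = u 0 v0.
  move=> i j; have [v0 _ Hv0] := @arg_maxP _ _ _ i xpredT (fun k => u 0 k) isT.
  by rewrite (Hmax v0 (fun k => Hv0 k isT) i) (Hmax v0 (fun k => Hv0 k isT) j).
move=> v0 Hm.
have spread x y : (0 < m x y)%N -> u 0 x = u 0 v0 -> u 0 y = u 0 v0.
  move=> hxy hx.
  have hpos w : true -> 0 <= (m x w)%:R * (u 0 x - u 0 w) :> rat.
    by move=> _; rewrite mulr_ge0 // subr_ge0 hx.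
  move/eqP: (psumr_eq0P hpos (harm x) (i := y) isT).
  rewrite mulf_eq0 pnatr_eq0 subr_eq0 => /orP [/eqP hm|/eqP <-] //.
  by rewrite hm in hxy.
have cl : closed (fun x y => (0 < m x y)%N) [pred x | u 0 x == u 0 v0].
  move=> x y hxy; rewrite !inE; apply/eqP/eqP; first exact: spread.
  by apply: spread; rewrite m_sym.
move=> j; have := closed_connect cl (m_conn v0 j).
by rewrite !inE eqxx => /esym/eqP.
Qed.

Lemma lapmx_rank : (n <= (\rank Q).+1)%N.
Proof.
have : (\rank (kermx Q) <= 1)%N.
  apply: leq_trans (rank_leq_row (const_mx 1 : 'rV[rat]_n)).
  apply: mxrankS; apply/row_subP => i.
  have hrow : row i (kermx Q) *m Q = 0 by rewrite -row_mul mulmx_ker row0.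
  have -> : row i (kermx Q) = (row i (kermx Q) 0 i) *: const_mx 1.
    apply/matrixP => a b; rewrite ord1 [in RHS]mxE [const_mx _ _ _]mxE mulr1.
    exact: lapmx_lker_const hrow b i.
  exact: scalemx_sub.
by rewrite mxrank_ker; lia.
Qed.

(* Degree-zero vectors lie in the row space of Q: adjoining such a vector to
   Q keeps the nonzero all-ones vector in the kernel, so the rank stays
   n - 1.  (The vertex i0 only witnesses that the graph is nonempty.) *)
Lemma deg0_row_sub (i0 : 'I_n) (X : divisor n) : degD X = 0 -> ((colD X)^T <= Q)%MS.
Proof.
move=> hX; set x := (colD X)^T.
have x1 : x *m (const_mx 1 : 'cV[rat]_n) = 0.
  apply/matrixP => a b; rewrite [a]ord1 [b]ord1 !mxE.
  under eq_bigr do rewrite !mxE mulr1.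
  by rewrite -rmorph_sum /= -/(degD X) hX.
have one0 : (const_mx 1 : 'rV[rat]_n) != 0.
  by apply/eqP => /matrixP /(_ 0 i0); rewrite !mxE => /eqP; rewrite oner_eq0.
have corank : (1 <= n - \rank (Q + x)%MS)%N.
  rewrite addsmxE -mxrank_tr -mxrank_ker.
  apply: (@leq_trans (\rank (const_mx 1 : 'rV[rat]_n))); first by rewrite rank_rV one0.
  apply: mxrankS; rewrite sub_kermx -[const_mx 1]trmx_const -trmx_mul.
  by rewrite mul_col_mx lapmx_const x1 col_mx0 trmx0.
have le := mxrank_leqif_sup (addsmxSl Q x).
have : \rank Q == \rank (Q + x)%MS.
  by rewrite eqn_leq le.1 /=; have := lapmx_rank; lia.
by rewrite le.2 => /(submx_trans (addsmxSr Q x)).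
Qed.

Lemma ginv_deg0 (L : 'M[rat]_n) (i0 : 'I_n) (X : divisor n) (F : 'cV[rat]_n) :
  Q *m L *m Q = Q -> degD X = 0 -> (colD X)^T *m L *m (Q *m F) = (colD X)^T *m F.
Proof.
move=> HL hX; set g := (colD X)^T *m pinvmx Q.
have hg : (colD X)^T = g *m Q by rewrite mulmxKpV // (deg0_row_sub i0 hX).
by rewrite hg !mulmxA -(mulmxA g) -(mulmxA g) HL.
Qed.

Lemma colD_shiftq_lap (q : 'I_n) (D D' : divisor n) (f : 'I_n -> int) :
  (forall v, D' v - D v = lap m f v) ->
  colD (shiftq q D') = colD (shiftq q D) + Q *m \col_j (f j)%:~R.
Proof.
move=> hD; apply/matrixP => i j; rewrite ord1 mxE [in RHS]mxE lapmx_mulcol !mxE !ffunE.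
rewrite (degD_lap hD) -[D' i](subrK (D i)) hD -lap_rat -rmorphD /=.
by rewrite [in RHS]addrC addrA.
Qed.

Lemma b_q_lap (L : 'M[rat]_n) (q : 'I_n) (D D' : divisor n) (f : 'I_n -> int) :
  Q *m L *m Q = Q -> (forall v, D' v - D v = lap m f v) ->
  b_q L q D' = b_q L q D + (\sum_v (f v - f q))%:~R.
Proof.
move=> HL hD; rewrite /b_q /energy_q /energy (colD_shiftq_lap q hD) mulmxDr mxE.
by rewrite (ginv_deg0 q _ HL (degD_shiftq _ _)) colD_pairing shiftq_one_pairing.
Qed.

(* Firing a set A of vertices: every vertex of A sends one chip along each
   edge leaving A.  As a function, this is the script -1_A. *)
Definition fire (A : {set 'I_n}) (w : 'I_n) : int := - (w \in A)%:Z.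

Lemma outdegE (A : {set 'I_n}) v : outdeg m A v = \sum_(w in ~: A) (m v w)%:Z.
Proof. exact: (big_morph Posz PoszD (erefl _)). Qed.

Lemma lap_level (A : {set 'I_n}) (f : 'I_n -> int) v :
  v \in A -> {in A, forall w, f w = f v} ->
  lap m f v = \sum_(w in ~: A) (m v w)%:Z * (f v - f w).
Proof.
move=> hv hf; rewrite /lap (bigID (mem A)) /= big1 ?add0r; last first.
  by move=> w hw; rewrite hf // subrr mulr0.
by apply: eq_bigl => w; rewrite in_setC.
Qed.

Lemma lap_fire_in (A : {set 'I_n}) v : v \in A -> lap m (fire A) v = - outdeg m A v.
Proof.
move=> hv; rewrite (@lap_level A) //; last by move=> w hw; rewrite /fire hw hv.
rewrite outdegE -sumrN; apply: eq_bigr => w; rewrite in_setC => /negbTE hw.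
by rewrite /fire hv hw oppr0 subr0 mulrN1.
Qed.

Lemma lap_fire_out (A : {set 'I_n}) v : v \notin A -> 0 <= lap m (fire A) v.
Proof.
move=> hv; rewrite /lap /fire (negbTE hv) sumr_ge0 // => w _.
by rewrite mulr_ge0 // sub0r opprK.
Qed.

Lemma lap_min_level (A : {set 'I_n}) (f : 'I_n -> int) v :
  v \in A -> {in A, forall w, f w = f v} -> {in ~: A, forall w, f v < f w} ->
  lap m f v <= - outdeg m A v.
Proof.
move=> hv hlev hgt; rewrite (lap_level hv hlev) outdegE -sumrN.
apply: ler_sum => w hw; rewrite -[X in _ <= X]mulrN1 ler_wpM2l //.
by have := hgt w hw; lia.
Qed.

Lemma linsys_refl (q : 'I_n) (D : divisor n) :
  (forall v, v != q -> 0 <= D v) -> linsys m q D D.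
Proof.
move=> Hnn; split=> //; exists (fun _ => 0) => v.
by rewrite subrr lap_const.
Qed.

(* Dhar's burning argument: if D is q-reduced and D + Δf is effective away
   from q, then f attains its minimum at q.  Otherwise the set A of
   minimisers avoids q, and the vertex of A with D v < outdeg_A(v) would go
   negative. *)
Lemma reduced_min_at_q (q : 'I_n) (D : divisor n) (f : 'I_n -> int) :
  q_reduced m q D -> (forall v, v != q -> 0 <= D v + lap m f v) ->
  forall v, f q <= f v.
Proof.
move=> [_ Hred] Hnn.
have [v0 _ Hmin] := @arg_minP _ _ _ q xpredT f isT.
suff -> : f q = f v0 by move=> v; exact: Hmin.
apply/eqP; apply: contraT => hneq.
set A := [set v | f v == f v0].
have hA : A != set0 by apply/set0Pn; exists v0; rewrite inE.
have hqA : q \notin A by rewrite inE.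
have [v hv hlt] := Hred A hA hqA.
have hvq : v != q by apply: contraNneq hqA => <-.
have hfv : f v = f v0 by move: hv; rewrite inE => /eqP.
have hlev : {in A, forall w, f w = f v} by move=> w; rewrite inE hfv => /eqP.
have hgt : {in ~: A, forall w, f v < f w}.
  by move=> w; rewrite !inE hfv lt_def => ->; exact: Hmin.
have := lap_min_level hv hlev hgt; have := Hnn v hvq.
move: hlt; lia.
Qed.

Lemma reduced_b_q_min (L : 'M[rat]_n) (q : 'I_n) (D D' : divisor n) :
  Q *m L *m Q = Q -> q_reduced m q D -> linsys m q D D' -> D' != D ->
  b_q L q D < b_q L q D'.
Proof.
move=> HL red [[f hf] Hnn'] hne.
rewrite (b_q_lap q HL hf) ltrDl ltr0z.
have hge : forall v, true -> 0 <= f v - f q.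
  move=> v _; rewrite subr_ge0; apply: (reduced_min_at_q red) => w hw.
  by rewrite -hf addrC subrK; exact: Hnn'.
rewrite lt_neqAle sumr_ge0 // andbT; apply: contraNneq hne => h0.
have hall w : f w = f q by apply/eqP; rewrite -subr_eq0 (psumr_eq0P hge (esym h0)).
apply/eqP/ffunP => v; apply/eqP; rewrite -subr_eq0 hf lap_const // => w.
by rewrite !hall.
Qed.

(* Conversely, if a set A avoiding q violates reducedness, firing A stays in
   |D|_q and lowers b_q by #|A|; so a strict minimiser is q-reduced. *)
Lemma b_q_min_reduced (L : 'M[rat]_n) (q : 'I_n) (D : divisor n) :
  Q *m L *m Q = Q -> linsys m q D D ->
  (forall D', linsys m q D D' -> D' != D -> b_q L q D < b_q L q D') ->
  q_reduced m q D.
Proof.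
move=> HL [_ Hnn] Hmin; split=> // A hA hqA.
have [/exists_inP [v hv hlt] | ] := boolP [exists v in A, D v < outdeg m A v].
  by exists v.
rewrite negb_exists_in => /forall_inP Hge; exfalso.
set D' : divisor n := [ffun v => D v + lap m (fire A) v].
have hD' v : D' v - D v = lap m (fire A) v by rewrite ffunE addrAC subrr add0r.
have Hlin : linsys m q D D'.
  split; first by exists (fire A).
  move=> v hv; rewrite ffunE; have [hvA | hvA] := boolP (v \in A).
    by rewrite lap_fire_in // subr_ge0 leNgt Hge.
  by rewrite addr_ge0 ?Hnn ?lap_fire_out.
have gain : \sum_v (fire A v - fire A q) = - #|A|%:Z.
  have fire_q : fire A q = 0 by rewrite /fire (negbTE hqA).
  under eq_bigr do rewrite fire_q subr0.
  rewrite sumrN; congr (- _).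
  rewrite (eq_bigr (fun v => if v \in A then 1 else 0)); last by move=> v _; case: (v \in A).
  by rewrite -big_mkcond sumr_const natz.
have hlt : b_q L q D' < b_q L q D.
  by rewrite (b_q_lap q HL hD') gain gtrDl ltrz0 oppr_lt0 ltz_nat card_gt0.
have hne : D' != D by apply: contraTneq hlt => ->; rewrite ltxx.
by move: (Hmin D' Hlin hne); rewrite ltNge (ltW hlt).
Qed.

End Laplacian.

Unset Implicit Arguments. Set Strict Implicit.

Theorem mainTheorem10 (n : nat) (m : mgraph n) (L : 'M[rat]_n)
  (q : 'I_n) (D : divisor n) :
  is_graph m -> lapmx m *m L *m lapmx m = lapmx m ->
  q_reduced m q D <->
  (linsys m q D D /\
   forall D' : divisor n, linsys m q D D' -> D' != D -> b_q L q D < b_q L q D').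
Proof.
move=> [m_sym [m_loop m_conn]] HL; split.
- move=> red; split; first exact: linsys_refl red.1.
  by move=> D'; apply: reduced_b_q_min.
- by case=> hself Hmin; apply: b_q_min_reduced hself Hmin.
Qed.
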